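(* Let $n\geq7$, let $u,v,u',v'\in G(J(P_n))$ with $u>_{\mathcal R}v$ and $u'>_{\mathcal R}v'$, and suppose $u'v'$ divides $uv$. (1) If $u\in\mathcal A$ and $v\in\mathcal C$, then $u'\in\mathcal A$ and $v'\in\mathcal C$. (2) If $u\in\mathcal B$ and $v\in\mathcal C$, then $u'\in\mathcal B$ and $v'\in\mathcal C$.
   Context: For $m\geq 1$, $P_m$ is the path graph on vertices $x_1,\ldots,x_m$ with edges $\{x_i,x_{i+1}\}$; $J(P_m)$ is its cover ideal (generated by $\prod_{x\in C}x$, $C$ a minimal vertex cover) and $G(I)$ denotes minimal monomial generators. The rooted list $\mathcal R(P_m)$: $\mathcal R(P_1)$ empty; $\mathcal R(P_2)=x_1,x_2$; $\mathcal R(P_3)=x_2,x_1x_3$; $\mathcal R(P_4)=x_1x_3,x_2x_3,x_2x_4$; for $m\geq5$, if $\mathcal R(P_{m-2})=u_1,\ldots,u_r$ and $\mathcal R(P_{m-3})=v_1,\ldots,v_s$, then $\mathcal R(P_m)=x_{m-1}u_1,\ldots,x_{m-1}u_r,x_mx_{m-2}v_1,\ldots,x_mx_{m-2}v_s$; it lists each element of $G(J(P_m))$ once, and $w>_{\mathcal R}w'$ iff $w$ precedes $w'$ in $\mathcal R(P_m)$. For $n\geq7$ the elements of $\mathcal R(P_n)$ are split into four sublists: $\mathcal A$ = those divisible by $x_{n-1}x_{n-3}$ (these are $x_{n-1}x_{n-3}w$, $w\in\mathcal R(P_{n-4})$); $\mathcal B$ = those divisible by $x_{n-1}$ but not $x_{n-3}$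 (these are $x_{n-1}x_{n-2}x_{n-4}w$, $w\in\mathcal R(P_{n-5})$); $\mathcal C$ = those divisible by $x_nx_{n-4}$ (these are $x_nx_{n-2}x_{n-4}w$, $w\in\mathcal R(P_{n-5})$); $\mathcal D$ = those divisible by $x_n$ but not $x_{n-4}$ (these are divisible by $x_nx_{n-2}x_{n-3}$). $\mathcal R(P_n)$ is the concatenation $\mathcal A,\mathcal B,\mathcal C,\mathcal D$. *)

(* Squarefree monomials in x_1..x_n are represented by the
   seq nat of the indices of their variables; monomial products are handled
   via exponent vectors (count_mem). *)
From mathcomp Require Import all_boot.
Set Implicit Arguments. Unset Strict Implicit. Unset Printing Implicit Defensive.

Definition mexp (s : seq nat) (i : nat) : nat := count_mem i s.

Definition mdvd (a b : seq nat) : Prop := forall i, mexp a i <= mexp b i.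

(* C is a vertex cover of the path P_n (vertices 1..n, edges {i,i+1}). *)
Definition is_cover (n : nat) (C : seq nat) : bool :=
  all (fun i => 0 < i <= n) C &&
  all (fun i => (i \in C) || (i.+1 \in C)) (iota 1 n.-1).

Definition min_cover (n : nat) (C : seq nat) : Prop :=
  is_cover n C /\
  forall D : seq nat, {subset D <= C} -> is_cover n D -> {subset C <= D}.

(* u is (the index list of) a minimal generator of the cover ideal J(P_n):
   u = prod_{x in C} x for a minimal vertex cover C. *)
Definition inG (n : nat) (u : seq nat) : Prop := uniq u /\ min_cover n u.

Fixpoint Rlist (m : nat) : seq (seq nat) :=
  match m with
  | 0 => [::]
  | 1 => [::]
  | 2 => [:: [:: 1]; [:: 2]]
  | 3 => [:: [:: 2]; [:: 1; 3]]
  | 4 => [:: [:: 1; 3]; [:: 2; 3]; [:: 2; 4]]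
  | S (S ((S ((S (S k)) as a)) as b)) =>
      (* b = m-2, a = m-3 *)
      map (cons b.+1) (Rlist b) ++ map (fun w => b.+2 :: b :: w) (Rlist a)
  end.

Definition rpos (n : nat) (u : seq nat) : nat := find (perm_eq u) (Rlist n).

Definition Rgt (n : nat) (u v : seq nat) : Prop := rpos n u < rpos n v.

Definition inA (n : nat) (u : seq nat) : Prop := (n.-1 \in u) /\ (n - 3 \in u).
Definition inB (n : nat) (u : seq nat) : Prop := (n.-1 \in u) /\ (n - 3 \notin u).
Definition inC (n : nat) (u : seq nat) : Prop := (n \in u) /\ (n - 4 \in u).
Definition inD (n : nat) (u : seq nat) : Prop := (n \in u) /\ (n - 4 \notin u).

From mathcomp Require Import all_boot zify.
Set Implicit Arguments. Unset Strict Implicit. Unset Printing Implicit Defensive.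

(* A minimal vertex cover of a path never contains x_i together with both of its
   neighbours, nor the endpoint x_n together with x_(n-1).  Hence x_(n-1) and x_n
   each divide uv exactly once, while each of u', v' contains one of them.  Every
   element of R(P_n) divisible by x_(n-1) precedes every element that is not (this
   needs that R(P_n) lists all of G(J(P_n))), so u' takes x_(n-1) and v' takes x_n.
   The remaining variables x_(n-4), x_(n-3), x_(n-2) of u' and v' are then forced
   by the edges {x_(n-4), x_(n-3)}, {x_(n-3), x_(n-2)} and by the multiplicities
   in uv. *)

Lemma is_coverP n C :
  is_cover n C <->
  (forall i, i \in C -> 0 < i <= n) /\
  (forall i, 0 < i < n -> (i \in C) || (i.+1 \in C)).
Proof.
rewrite /is_cover; split.
  case/andP=> /allP C_range /allP C_edge; split=> // i i_lt.
  by apply: C_edge; rewrite mem_iota; lia.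
case=> C_range C_edge; apply/andP; split; apply/allP=> // i.
by rewrite mem_iota => i_lt; apply: C_edge; lia.
Qed.

Lemma is_cover_edge n C i : is_cover n C -> 0 < i < n -> (i \in C) || (i.+1 \in C).
Proof. by case/is_coverP=> _; apply. Qed.

Lemma is_cover_succ n C i : is_cover n C -> 0 < i < n -> i \notin C -> i.+1 \in C.
Proof. by move=> covC /(is_cover_edge covC); case: (i \in C). Qed.

Lemma is_cover_pred n C i : is_cover n C -> 0 < i < n -> i.+1 \notin C -> i \in C.
Proof. by move=> covC /(is_cover_edge covC); case: (i.+1 \in C); rewrite ?orbF. Qed.

Lemma eq_is_cover n C D : C =i D -> is_cover n C = is_cover n D.
Proof.
by move=> CD; rewrite /is_cover (eq_all_r CD); congr andb; apply: eq_all => i; rewrite !CD.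
Qed.

Definition irredundant (n : nat) (C : seq nat) : bool :=
  all (fun i => (1 < i) && (i.-1 \notin C) || (i < n) && (i.+1 \notin C)) C.

Lemma eq_irredundant n C D : C =i D -> irredundant n C = irredundant n D.
Proof. by move=> CD; rewrite /irredundant (eq_all_r CD); apply: eq_all => i; rewrite !CD. Qed.

Lemma min_cover_irredundant n C : min_cover n C -> irredundant n C.
Proof.
case=> covC minC; have [C_range C_edge] := proj1 (is_coverP n C) covC.
apply/allP=> i iC; apply: contraT.
rewrite negb_or !negb_and !negbK -!implybE => /andP[/implyP predC /implyP succC].
have subD : {subset [seq j <- C | j != i] <= C} by move=> j; rewrite mem_filter => /andP[].
suff /(minC _ subD)/(_ i iC) : is_cover n [seq j <- C | j != i] by rewrite mem_filter eqxx.
apply/is_coverP; split=> [j /subD/C_range //| j j_lt]; rewrite !mem_filter.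
case: (eqVneq j i) j_lt => [-> /andP[_ lt_in] | ji j_lt] /=.
  by rewrite (gtn_eqF (ltnSn i)) succC.
case: (eqVneq j.+1 i) => [ij | _] /=; last exact: C_edge.
by subst i; rewrite orbF predC //; case/andP: j_lt.
Qed.

Lemma min_cover_sandwich n C i : min_cover n C -> i.-1 \in C -> i.+1 \in C -> i \notin C.
Proof.
move/min_cover_irredundant/allP=> irrC predC succC; apply/negP=> /irrC.
by rewrite predC succC !andbF.
Qed.

Lemma min_cover_last n C : min_cover n C -> n \in C -> n.-1 \notin C.
Proof. by move/min_cover_irredundant/allP=> irrC /irrC; rewrite ltnn /= orbF => /andP[]. Qed.

(* The edge {m, m+1} is covered by x_(m+1), so the part of C beyond m can always
   complete a cover of P_m to a cover of P_p. *)
Lemma min_cover_restrict p m C : m < p -> m.+1 \in C -> min_cover p C ->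
  min_cover m [seq i <- C | i <= m].
Proof.
move=> lt_mp Cm1 [covC minC]; have [C_range C_edge] := proj1 (is_coverP p C) covC.
split.
  apply/is_coverP; split=> [i|i /andP[i_gt0 lt_im]]; rewrite !mem_filter.
    by case/andP=> le_im /C_range /andP[-> _].
  by rewrite lt_im (ltnW lt_im); apply: C_edge; lia.
move=> D subD covD; have [D_range D_edge] := proj1 (is_coverP m D) covD.
have subE : {subset D ++ [seq i <- C | m < i] <= C}.
  move=> i; rewrite mem_cat mem_filter => /orP[/subD|/andP[//]].
  by rewrite mem_filter => /andP[].
have covE : is_cover p (D ++ [seq i <- C | m < i]).
  apply/is_coverP; split=> [i|i i_lt]; rewrite !mem_cat !mem_filter.
    by case/orP=> [/D_range|/andP[_ /C_range]]; lia.
  case: (ltngtP i m) => [lt_im | lt_mi | ->].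
  - by case/orP: (D_edge i ltac:(lia)) => ->; rewrite ?orbT.
  - have -> : m < i.+1 by lia.
    by case/orP: (C_edge i i_lt) => ->; rewrite ?orbT.
  - by rewrite Cm1 ltnSn !orbT.
move=> i; rewrite mem_filter => /andP[le_im /(minC _ subE covE)].
by rewrite mem_cat mem_filter ltnNge le_im orbF.
Qed.

Lemma perm_filter_le m w t : uniq w -> uniq t -> all (fun i => m < i) t ->
  (forall i, m < i -> (i \in w) = (i \in t)) -> perm_eq w (t ++ [seq i <- w | i <= m]).
Proof.
move=> uniq_w uniq_t /allP t_gt w_t; apply: uniq_perm => //.
  rewrite cat_uniq uniq_t filter_uniq // andbT; apply/hasPn=> i.
  by rewrite mem_filter => /andP[le_im _]; apply/negP=> /t_gt; rewrite ltnNge le_im.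
move=> i; rewrite mem_cat mem_filter; case: (leqP i m) => [le_im | /w_t->]; last by rewrite orbF.
by have /negbTE-> : i \notin t by apply/negP=> /t_gt; rewrite ltnNge le_im.
Qed.

Lemma RlistS k : Rlist k.+4.+1 =
  map (cons k.+4) (Rlist k.+3) ++ map (fun w => k.+4.+1 :: k.+3 :: w) (Rlist k.+2).
Proof. by []. Qed.

Lemma Rlist_mask_complete b : 1 < size b <= 4 ->
  is_cover (size b) (mask b (iota 1 (size b))) ->
  irredundant (size b) (mask b (iota 1 (size b))) ->
  has (perm_eq (mask b (iota 1 (size b)))) (Rlist (size b)).
Proof. by case: b => [|[] [|[] [|[] [|[] [|]]]]]. Qed.

Lemma Rlist_complete_small m w : 1 < m <= 4 -> inG m w -> has (perm_eq w) (Rlist m).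
Proof.
case/andP=> m_gt1 m_le4 [uniq_w min_w].
have [w_range _] := proj1 (is_coverP m w) (proj1 min_w).
set s := [seq i <- iota 1 m | i \in w].
have ws : w =i s.
  move=> i; rewrite mem_filter mem_iota.
  by case iw: (i \in w) => //; have := w_range i iw; lia.
have /permPl ws_perm : perm_eq w s by apply: uniq_perm; rewrite ?filter_uniq ?iota_uniq.
have := Rlist_mask_complete (b := [seq i \in w | i <- iota 1 m]).
rewrite size_map size_iota -filter_mask -/s m_gt1 m_le4 (eq_has ws_perm).
rewrite -(eq_is_cover _ ws) -(eq_irredundant _ ws).
by apply=> //; [exact: (proj1 min_w) | exact: min_cover_irredundant].
Qed.

Lemma Rlist_complete m w : 1 < m -> inG m w -> has (perm_eq w) (Rlist m).
Proof.
elim/ltn_ind: m w => m IH w m_gt1 Gw.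
case: (leqP m 4) => [m_le4 | m_gt4]; first by apply: Rlist_complete_small; rewrite ?m_gt1.
have [uniq_w min_w] := Gw; have [w_range _] := proj1 (is_coverP m w) (proj1 min_w).
have [k Em] : exists k, m = k.+4.+1 by exists (m - 5); lia.
subst m; rewrite RlistS has_cat.
case: (boolP (k.+4 \in w)) => [w4 | w4N]; apply/orP; [left | right].
- have w5N : k.+4.+1 \notin w by apply/negP=> /(min_cover_last min_w); rewrite w4.
  have w_gt i : k.+3 < i -> (i \in w) = (i \in [:: k.+4]).
    rewrite inE; case: (eqVneq i k.+4) => [-> // | ne4] lt_i.
    apply/negP=> iw; have := w_range i iw.
    by case: (eqVneq i k.+4.+1) iw => [-> | ne5]; [rewrite (negbTE w5N) | lia].
  have w' : inG k.+3 [seq i <- w | i <= k.+3].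
    by split; [exact: filter_uniq | exact: min_cover_restrict (leqnSn _) w4 min_w].
  have /hasP[s s_in ws] := IH _ (leqnSn _) _ isT w'.
  apply/hasP; exists (k.+4 :: s); first exact: map_f.
  by apply: perm_trans (perm_filter_le uniq_w _ _ w_gt) _; rewrite /= ?inE ?perm_cons //; lia.
- have w5 : k.+4.+1 \in w := is_cover_succ (i := k.+4) (proj1 min_w) (ltnSn _) w4N.
  have w3 : k.+3 \in w := is_cover_pred (i := k.+3) (proj1 min_w) (leqnSn _) w4N.
  have w_gt i : k.+2 < i -> (i \in w) = (i \in [:: k.+4.+1; k.+3]).
    rewrite !inE; case: (eqVneq i k.+4.+1) => [-> // | ne5].
    case: (eqVneq i k.+3) => [-> // | ne3] lt_i; apply/negP=> iw; have := w_range i iw.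
    by case: (eqVneq i k.+4) iw => [-> | ne4]; [rewrite (negbTE w4N) | lia].
  have w' : inG k.+2 [seq i <- w | i <= k.+2].
    by split; [exact: filter_uniq | exact: min_cover_restrict (ltnW (leqnSn _)) w3 min_w].
  have /hasP[s s_in ws] := IH _ (ltnW (leqnSn _)) _ isT w'.
  apply/hasP; exists [:: k.+4.+1, k.+3 & s]; first exact: (map_f (fun w => _ :: _ :: w)).
  by apply: perm_trans (perm_filter_le uniq_w _ _ w_gt) _; rewrite /= ?inE ?perm_cons //; lia.
Qed.

Lemma Rgt_predn_mem n u v : 4 < n -> inG n v -> n.-1 \in v -> Rgt n u v -> n.-1 \in u.
Proof.
case: n => [|[|[|[|[|k]]]]] // _ Gv v4; apply: contraTT => u4N.
rewrite /Rgt /rpos RlistS !find_cat -leqNgt.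
have /negbTE-> : ~~ has (perm_eq u) (map (cons k.+4) (Rlist k.+3)).
  by apply/hasP=> -[_ /mapP[s _ ->] /perm_mem/(_ k.+4)]; rewrite inE eqxx (negbTE u4N).
have v_first : has (perm_eq v) (map (cons k.+4) (Rlist k.+3)).
  have := Rlist_complete (m := k.+4.+1) isT Gv; rewrite RlistS has_cat.
  case/orP=> [// | /hasP[_ /mapP[s _ ->] vs]].
  have v5 : k.+4.+1 \in v by rewrite (perm_mem vs) inE eqxx.
  by move: v4; rewrite /= (negbTE (min_cover_last (proj2 Gv) v5)).
rewrite v_first; apply: leq_trans (leq_addr _ _).
by apply: ltnW; rewrite -has_find.
Qed.

Lemma mdvd_cat_mem a b c d : uniq a -> uniq b -> uniq c -> uniq d ->
  mdvd (a ++ b) (c ++ d) -> forall i, (i \in a) + (i \in b) <= (i \in c) + (i \in d).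
Proof. by move=> ua ub uc ud dvd i; have := dvd i; rewrite /mexp !count_cat !count_uniq_mem. Qed.

Section LastVariables.

(* The path is P_(m+4), so x_m, ..., x_(m+4) are x_(n-4), ..., x_n. *)
Variables (m : nat) (u v u' v' : seq nat).
Hypothesis m_gt0 : 0 < m.
Hypotheses (Gu : inG m.+4 u) (Gv : inG m.+4 v) (Gu' : inG m.+4 u') (Gv' : inG m.+4 v').
Hypotheses (lt_u'v' : Rgt m.+4 u' v') (dvd : mdvd (u' ++ v') (u ++ v)).

Let mult_le := mdvd_cat_mem (proj1 Gu') (proj1 Gv') (proj1 Gu) (proj1 Gv) dvd.

Let inG_pred C i : inG m.+4 C -> i.+1 \notin C -> 0 < i < m.+4 -> i \in C.
Proof. by case=> _ [covC _] /[swap]; apply: is_cover_pred. Qed.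

Lemma last_vars_split : m.+3 \in u -> m.+4 \in v -> (m.+3 \in u') && (m.+4 \in v').
Proof.
move=> u3 v4.
have u4N : m.+4 \notin u by apply/negP=> /(min_cover_last (proj2 Gu)); rewrite u3.
have v3N : m.+3 \notin v := min_cover_last (proj2 Gv) v4.
have u'_edge := is_cover_edge (i := m.+3) (proj1 (proj2 Gu')) (ltnSn _).
have v'_edge := is_cover_edge (i := m.+3) (proj1 (proj2 Gv')) (ltnSn _).
have v'_u' : (m.+3 \in v') ==> (m.+3 \in u').
  by apply/implyP=> v'3; exact: (Rgt_predn_mem (n := m.+4) m_gt0 Gv' v'3 lt_u'v').
move: (mult_le m.+3) (mult_le m.+4) u'_edge v'_edge v'_u'.
rewrite u3 (negbTE v3N) (negbTE u4N) v4.
by case: (m.+3 \in u'); case: (m.+3 \in v'); case: (m.+4 \in u'); case: (m.+4 \in v').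
Qed.

Lemma AC_split : m.+3 \in u -> m.+1 \in u -> m.+4 \in v -> m \in v ->
  [/\ m.+3 \in u', m.+1 \in u', m.+4 \in v' & m \in v'].
Proof.
move=> u3 u1 v4 v0; have /andP[u'3 v'4] := last_vars_split u3 v4.
have v2 : m.+2 \in v := inG_pred Gv (min_cover_last (proj2 Gv) v4) (leqnSn _).
have v'2 : m.+2 \in v' := inG_pred Gv' (min_cover_last (proj2 Gv') v'4) (leqnSn _).
have u2N : m.+2 \notin u := min_cover_sandwich (i := m.+2) (proj2 Gu) u1 u3.
have v1N : m.+1 \notin v := min_cover_sandwich (i := m.+1) (proj2 Gv) v0 v2.
have u'2N : m.+2 \notin u'.
  by apply/negP=> u'2; move: (mult_le m.+2); rewrite u'2 v'2 (negbTE u2N) v2.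
have u'1 : m.+1 \in u' := inG_pred Gu' u'2N (leqW (leqnSn _)).
have v'1N : m.+1 \notin v'.
  by apply/negP=> v'1; move: (mult_le m.+1); rewrite u'1 v'1 u1 (negbTE v1N).
by split; last by apply: inG_pred Gv' v'1N _; lia.
Qed.

Lemma BC_split : m.+3 \in u -> m.+1 \notin u -> m.+4 \in v -> m \in v ->
  [/\ m.+3 \in u', m.+1 \notin u', m.+4 \in v' & m \in v'].
Proof.
move=> u3 u1N v4 v0; have /andP[u'3 v'4] := last_vars_split u3 v4.
have v2 : m.+2 \in v := inG_pred Gv (min_cover_last (proj2 Gv) v4) (leqnSn _).
have v1N : m.+1 \notin v := min_cover_sandwich (i := m.+1) (proj2 Gv) v0 v2.
have u'1N : m.+1 \notin u'.
  by apply/negP=> u'1; move: (mult_le m.+1); rewrite u'1 (negbTE u1N) (negbTE v1N).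
have v'1N : m.+1 \notin v'.
  by apply/negP=> v'1; move: (mult_le m.+1); rewrite v'1 (negbTE u1N) (negbTE v1N) addn1.
by split; last by apply: inG_pred Gv' v'1N _; lia.
Qed.

End LastVariables.

Theorem lemma3p10 (n : nat) (u v u' v' : seq nat) :
  7 <= n ->
  inG n u -> inG n v -> inG n u' -> inG n v' ->
  Rgt n u v -> Rgt n u' v' ->
  mdvd (u' ++ v') (u ++ v) ->
  ((inA n u /\ inC n v) -> (inA n u' /\ inC n v')) /\
  ((inB n u /\ inC n v) -> (inB n u' /\ inC n v')).
Proof.
move=> n_ge7 Gu Gv Gu' Gv' _ lt_u'v' dvd.
have [m Em] : exists m, n = m.+4 by exists (n - 4); lia.
have m_gt0 : 0 < m by lia.
subst n; rewrite /inA /inB /inC /= !subSS !subn0.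
split=> -[[u3 u1] [v4 v0]].
  by case: (AC_split m_gt0 Gu Gv Gu' Gv' lt_u'v' dvd u3 u1 v4 v0).
by case: (BC_split m_gt0 Gu Gv Gu' Gv' lt_u'v' dvd u3 u1 v4 v0).
Qed.
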